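(* Let $A\in\mathbb{R}^{n\times n}$ and $C_i\in\mathbb{R}^{m_i\times n}$, $i\in\mathcal{N}=\{1,\dots,N\}$, and let $q\ge 0$ be an integer. Assume: (i) ($2q$-redundant observability) for every $\mathcal{N}'\subset\mathcal{N}$ with $|\mathcal{N}'|=N-2q$, the pair $(C',A)$ is observable, where $C'$ is the matrix obtained by stacking the $C_i$, $i\in\mathcal{N}'$; (ii) there exists a basis $\{v_1,\dots,v_n\}$ of $\mathbb{R}^n$ such that, for every $i\in\mathcal{N}$, the unobservable subspace $\mathcal{U}_i$ of the pair $(C_i,A)$ is the span of a subset of $\{v_1,\dots,v_n\}$. For such a basis define, for $i\in\mathcal{N}$ and $l\in\{1,\dots,n\}$, $s_i^l=1$ if $v_l\notin\mathcal{U}_i$ and $s_i^l=0$ if $v_l\in\mathcal{U}_i$. Then, for each $l=1,\dots,n$, $$|\{ i \in \mathcal{N} : s_i^l = 1 \}| \ge 2q+1.$$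
   Context: $\mathcal{U}_i$ denotes the unobservable subspace of $(C_i,A)$, i.e., the kernel of the observability matrix $\mathrm{col}(C_i, C_iA,\dots,C_iA^{n-1})$. $|\cdot|$ denotes cardinality. *)

From HB Require Import structures.
From mathcomp Require Import all_boot all_order all_algebra.
Set Implicit Arguments. Unset Strict Implicit. Unset Printing Implicit Defensive.
Import Order.TTheory GRing.Theory Num.Theory.
Local Open Scope ring_scope.

Definition unobs (R : fieldType) (p n : nat) (C : 'M[R]_(p, n)) (A : 'M[R]_n)
  (x : 'cV[R]_n) : bool :=
  [forall k : 'I_n, C *m (A ^+ k) *m x == 0].

Definition observable (R : fieldType) (p n : nat) (C : 'M[R]_(p, n)) (A : 'M[R]_n)
  : Prop := forall x : 'cV[R]_n, unobs C A x -> x = 0.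

Definition stack (R : fieldType) (N n : nat) (m : 'I_N -> nat)
  (C : forall i : 'I_N, 'M[R]_(m i, n)) (S : {set 'I_N}) :=
  \mxcol_(j < #|S|) C (enum_val j).

Definition is_basis (R : fieldType) (n : nat) (v : 'I_n -> 'cV[R]_n) : Prop :=
  (forall c : 'I_n -> R, \sum_(l < n) c l *: v l = 0 -> forall l, c l = 0) /\
  (forall x : 'cV[R]_n, exists c : 'I_n -> R, x = \sum_(l < n) c l *: v l).

Definition in_span (R : fieldType) (n : nat) (v : 'I_n -> 'cV[R]_n)
  (L : {set 'I_n}) (x : 'cV[R]_n) : Prop :=
  exists c : 'I_n -> R, x = \sum_(l in L) c l *: v l.

From HB Require Import structures.
From mathcomp Require Import all_boot all_order all_algebra.
Set Implicit Arguments. Unset Strict Implicit. Unset Printing Implicit Defensive.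
Import Order.TTheory GRing.Theory Num.Theory.
Local Open Scope ring_scope.

(* If fewer than 2q+1 agents observe v_l, then at least N-2q agents have v_l
   in their unobservable subspace. Stacking N-2q of them gives a pair (C', A)
   for which v_l is unobservable, so v_l = 0 by 2q-redundant observability,
   which is impossible for a basis vector. *)

Lemma exists_subset_card (T : finType) (B : {set T}) (k : nat) :
  (k <= #|B|)%N -> exists2 A : {set T}, A \subset B & #|A| = k.
Proof.
rewrite -bin_gt0 -cards_draws => /card_gt0P [A].
by rewrite inE => /andP [sAB /eqP cardA]; exists A.
Qed.

Lemma basis_vec_neq0 (R : fieldType) (n : nat) (v : 'I_n -> 'cV[R]_n) :
  is_basis v -> forall l, v l != 0.
Proof.
move=> [v_free _] l; apply/eqP => vl0.
have sum0 : \sum_(k < n) (k == l)%:R *: v k = 0.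
  by rewrite (bigD1 l) //= vl0 scaler0 add0r big1 // => k /negbTE ->; rewrite scale0r.
by have /eqP := v_free _ sum0 l; rewrite eqxx oner_eq0.
Qed.

Lemma unobs_stack (R : fieldType) (n N : nat) (m : 'I_N -> nat)
  (A : 'M[R]_n) (C : forall i : 'I_N, 'M[R]_(m i, n)) (S : {set 'I_N})
  (x : 'cV[R]_n) :
  {in S, forall i, unobs (C i) A x} -> unobs (stack C S) A x.
Proof.
move=> unobsS; apply/forallP => k; apply/eqP.
rewrite /stack !mxcol_mul -[RHS]mxcol0; apply/eq_mxcolP => j.
by have /forallP/(_ k)/eqP := unobsS _ (enum_valP j).
Qed.

Theorem lemma1 (R : realFieldType) (n N : nat) (m : 'I_N -> nat)
  (A : 'M[R]_n) (C : forall i : 'I_N, 'M[R]_(m i, n)) (q : nat) :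
  (2 * q <= N)%N ->
  (* (i) 2q-redundant observability *)
  (forall S : {set 'I_N}, #|S| = (N - 2 * q)%N -> observable (stack C S) A) ->
  (* (ii) for any basis v such that every U_i is spanned by a subset of it *)
  forall v : 'I_n -> 'cV[R]_n, is_basis v ->
  (forall i : 'I_N, exists L : {set 'I_n},
      forall x : 'cV[R]_n, unobs (C i) A x <-> in_span v L x) ->
  forall l : 'I_n, (2 * q + 1 <= #|[set i : 'I_N | ~~ unobs (C i) A (v l)]|)%N.
Proof.
move=> _ obs v v_basis _ l.
set T := [set i | ~~ unobs (C i) A (v l)].
rewrite leqNgt addn1 ltnS; apply/negP => cardT.
have cardTc : (N - 2 * q <= #|~: T|)%N.
  by rewrite leq_subLR -[X in (X <= _)%N](card_ord N) -(cardsC T) leq_add2r.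
have [S sSTc cardS] := exists_subset_card cardTc.
have vl0 : v l = 0.
  apply: (obs S cardS); apply: unobs_stack => i /(subsetP sSTc).
  by rewrite !inE negbK.
by have := basis_vec_neq0 v_basis l; rewrite vl0 eqxx.
Qed.
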